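(* Let $d_1<d_2<d_3$ be positive integers with $\gcd(d_1,d_2,d_3)=1$ forming a minimal generating set. Let $r=r(N)$ satisfy $r(N)\to\infty$ and $r(N)/N\to0$ as $N\to\infty$. Let $\mathbb M_{N,r}$ be the set of integer vectors $\mathbf e=(Nd_1+j_1,Nd_2+j_2,Nd_3+j_3)$ with $-r\le j_i\le r$, $\gcd(e_1,e_2,e_3)=1$, and $\{e_1,e_2,e_3\}$ a minimal generating set. Define $$K_{N,r}=\frac{\sum_{\mathbf e\in\mathbb M_{N,r}} C(\mathbf e)}{\sum_{\mathbf e\in\mathbb M_{N,r}}\sqrt{e_1e_2e_3}}.$$ Then $\liminf_{N\to\infty}K_{N,r(N)}\ge\sqrt3$. In particular the conjectured value $g_3=\sqrt{2}$ (for which $\lim K_{N,r}$ would equal $\sqrt{2!}$) is not the limit.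
   Context: $\mathsf S(e_1,e_2,e_3)=\{c_1e_1+c_2e_2+c_3e_3: c_i\in\mathbb Z_{\ge0}\}$. The conductor $C(\mathbf e)$ is the smallest integer $s$ such that every integer $\ge s$ lies in $\mathsf S(e_1,e_2,e_3)$. A set of positive integers is a minimal generating set if no element is a nonnegative integer combination of the others. *)

From HB Require Import structures.
From mathcomp Require Import all_boot all_order all_algebra.
From mathcomp Require Import all_classical all_reals all_analysis.
Set Implicit Arguments. Unset Strict Implicit. Unset Printing Implicit Defensive.
Import Order.TTheory GRing.Theory Num.Theory.

Definition inS3 (e1 e2 e3 n : nat) : Prop :=
  exists c1 c2 c3 : nat, n = c1 * e1 + c2 * e2 + c3 * e3.

Definition minimal_gen3 (e1 e2 e3 : nat) : Prop :=
  [/\ 0 < e1, 0 < e2 & 0 < e3] /\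
  [/\ ~ (exists a b : nat, e1 = a * e2 + b * e3),
      ~ (exists a b : nat, e2 = a * e1 + b * e3) &
      ~ (exists a b : nat, e3 = a * e1 + b * e2)].

Definition is_conductor_bound (e1 e2 e3 s : nat) : Prop :=
  forall n : nat, s <= n -> inS3 e1 e2 e3 n.

(* conductor C(e): smallest s such that every integer >= s lies in S(e);
   (set to 0 when no such s exists, which never happens under gcd = 1) *)
Definition conductor (e1 e2 e3 : nat) : nat :=
  match pselect (exists s, is_conductor_bound e1 e2 e3 s) with
  | left h =>
      @ex_minn (fun s => `[< is_conductor_bound e1 e2 e3 s >])
        (let: ex_intro s hs := h in ex_intro _ s (asboolT hs))
  | right _ => 0
  end.

(* the index triple (i1,i2,i3) in 'I_(2r+1)^3 encodes j_k = i_k - r in [-r,r];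
   the corresponding integer vector e_k = N d_k + j_k *)
Definition ecomp (N d r : nat) (i : 'I_(2 * r + 1)) : int :=
  (N * d)%:Z + (i%:Z - r%:Z).

Definition trip (r : nat) := ('I_(2 * r + 1) * 'I_(2 * r + 1) * 'I_(2 * r + 1))%type.

Definition inM (N d1 d2 d3 r : nat) (i : trip r) : Prop :=
  let: (i1, i2, i3) := i in
  let x1 := ecomp N d1 i1 in
  let x2 := ecomp N d2 i2 in
  let x3 := ecomp N d3 i3 in
  [/\ (0 < x1)%R, (0 < x2)%R, (0 < x3)%R,
      gcdn `|x1|%N (gcdn `|x2|%N `|x3|%N) = 1 &
      minimal_gen3 `|x1|%N `|x2|%N `|x3|%N].

Definition Cof (N d1 d2 d3 r : nat) (i : trip r) : nat :=
  let: (i1, i2, i3) := i in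
  conductor `|ecomp N d1 i1|%N `|ecomp N d2 i2|%N `|ecomp N d3 i3|%N.

Definition prodof (N d1 d2 d3 r : nat) (i : trip r) : nat :=
  let: (i1, i2, i3) := i in
  (`|ecomp N d1 i1| * `|ecomp N d2 i2| * `|ecomp N d3 i3|)%N.

Local Open Scope ring_scope.

Definition K (R : realType) (d1 d2 d3 N r : nat) : R :=
  (\sum_(i : trip r | `[< inM N d1 d2 d3 i >]) ((Cof N d1 d2 d3 i)%:R : R))
  / (\sum_(i : trip r | `[< inM N d1 d2 d3 i >]) Num.sqrt ((prodof N d1 d2 d3 i)%:R : R)).

(* Davison's bound C(a,b,c) + a + b + c >= sqrt(3abc).  In each residue class
   mod a pick the least representation y b + z c (by value, then by y).  The
   chosen pairs (y,z) form an L-shaped region: the rectangle [0,alpha) x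
   [0,beta) minus a corner [p,alpha) x [q,beta).  There is one pair per
   residue, so the area of the L is at least a, and its two outer corners
   have values at most C + a, since subtracting a from them gives a gap of
   S(a,b,c); AM-GM turns this into 3abc <= (C + a + b + c)^2.
   For e in M_{N,r} the sum e1 + e2 + e3 is O(N) whereas sqrt(e1 e2 e3) has
   order N^(3/2), so C(e) >= (sqrt 3 - o(1)) sqrt(e1 e2 e3) uniformly and
   K_{N,r} >= sqrt 3 - o(1); M_{N,r} is nonempty for large N thanks to an
   explicit bounded perturbation of N d that is coprime and minimal. *)

From HB Require Import structures.
From mathcomp Require Import all_boot all_order all_algebra.
From mathcomp Require Import all_classical all_reals all_analysis.
From mathcomp Require Import zify ring lra.
Import Order.TTheory GRing.Theory Num.Theory.
Import numFieldNormedType.Exports.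

Lemma least_nat (P : nat -> Prop) :
  (exists n, P n) -> exists2 n, P n & forall m, P m -> n <= m.
Proof.
case=> n Pn; case: (ex_minnP (ex_intro (fun k => `[< P k >]) n (asboolT Pn))).
by move=> m /asboolP Pm minm; exists m => // k /asboolT /minm.
Qed.

Lemma downward_closed_initial (P : nat -> Prop) :
  (forall m n, m <= n -> P n -> P m) -> (exists n, ~ P n) ->
  exists k, forall n, P n <-> n < k.
Proof.
move=> downP /least_nat[k nPk mink]; exists k => n; split.
  by move=> Pn; rewrite ltnNge; apply/negP => /downP/(_ Pn).
by move=> ltnk; apply: contrapT => /mink; rewrite leqNgt ltnk.
Qed.

Lemma eq_mod_addmul {x y d : nat} : y <= x -> x = y %[mod d] -> exists k, x = y + k * d.
Proof. by move=> le /eqP; rewrite eqn_mod_dvd // => /dvdnP[k hk]; exists k; lia. Qed.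

Lemma eq_mod_cancel {d x y t u v : nat} :
  x + t = u -> y + t = v -> u = v %[mod d] -> x = y %[mod d].
Proof. by move=> <- <- /eqP; rewrite eqn_modDr => /eqP. Qed.

Lemma three_mul_le_sqr u v w : 3 * (u * v + u * w + v * w) <= (u + v + w) ^ 2.
Proof.
have := (nat_Cauchy u v).1; have := (nat_Cauchy u w).1; have := (nat_Cauchy v w).1.
rewrite !expnS !expn0 !muln1; lia.
Qed.

Lemma dvdn_coprime3 {a b c m : nat} :
  gcdn a (gcdn b c) = 1 -> a %| m * b -> a %| m * c -> a %| m.
Proof.
move=> coprime_abc hb hc.
by rewrite -[m]muln1 -coprime_abc !muln_gcdr !dvdn_gcd dvdn_mull //= hb hc.
Qed.

Lemma Lshape_area_sqr_le p q y z b c :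
  3 * ((p * q + p * z + y * q) * b * c)
    <= maxn ((p + y) * b + q * c) (p * b + (q + z) * c) ^ 2.
Proof.
set X := (p + y) * b + q * c; set Y := p * b + (q + z) * c.
have -> : (p * q + p * z + y * q) * b * c
    = p * b * (q * c) + p * b * (z * c) + y * b * (q * c) by ring.
case: (leqP (z * c) (y * b)) => h.
  have := leq_mul (leqnn (p * b)) h; have := three_mul_le_sqr (p * b) (y * b) (q * c).
  by have := leq_maxl X Y; rewrite -(leq_exp2r _ _ (ltn0Sn 1)) /X /Y; lia.
have := leq_mul (ltnW h) (leqnn (q * c)); have := three_mul_le_sqr (p * b) (q * c) (z * c).
by have := leq_maxr X Y; rewrite -(leq_exp2r _ _ (ltn0Sn 1)) /X /Y; lia.
Qed.

Section Apery.
Variables a b c : nat.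

Definition lincomb (y z : nat) := y * b + z * c.

Definition precedes (y' z' y z : nat) :=
  lincomb y' z' < lincomb y z \/ lincomb y' z' = lincomb y z /\ y' < y.

(* The values lincomb y z of the minimal representatives form the Apery set
   of S(a,b,c) with respect to a; breaking ties by y makes the minimal
   representative of a class unique (for c > 0). *)
Definition minrep (y z : nat) :=
  forall y' z', lincomb y' z' = lincomb y z %[mod a] -> ~ precedes y' z' y z.

Lemma lincombD y z y' z' : lincomb (y + y') (z + z') = lincomb y z + lincomb y' z'.
Proof. by rewrite /lincomb !mulnDl addnACA. Qed.

Lemma minrep_exists y z : exists y' z',
  [/\ minrep y' z', lincomb y' z' = lincomb y z %[mod a] & lincomb y' z' <= lincomb y z].
Proof.
pose cls v y' := exists z', lincomb y' z' = lincomb y z %[mod a] /\ lincomb y' z' = v.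
have [v [y1 cls1] minv] := least_nat (fun v => exists y', cls v y')
  (ex_intro _ _ (ex_intro _ y (ex_intro _ z (conj erefl erefl)))).
have [y0 [z0 [cl0 v0]] miny0] := least_nat (cls v) (ex_intro _ y1 cls1).
exists y0, z0; split=> //; last by rewrite v0; apply: minv; exists y, z.
move=> y' z' cl'; have cl : lincomb y' z' = lincomb y z %[mod a] by rewrite cl'.
have := minv _ (ex_intro _ y' (ex_intro _ z' (conj cl erefl))).
rewrite /precedes v0 => ge [|[eqv]]; first lia.
by have := miny0 y' (ex_intro _ z' (conj cl eqv)); lia.
Qed.

Lemma minrep_le {y z y0 z0 : nat} : y0 <= y -> z0 <= z -> minrep y z -> minrep y0 z0.
Proof.
move=> /subnK <- /subnK <-; set dy := y - y0; set dz := z - z0 => hD y' z' hc hp.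
apply: (hD (dy + y') (dz + z')); last by move: hp; rewrite /precedes !lincombD; lia.
by rewrite !lincombD; apply/eqP; rewrite eqn_modDl; apply/eqP.
Qed.

Lemma minrep_unique {y z y' z' : nat} : 0 < c -> minrep y z -> minrep y' z' ->
  lincomb y z = lincomb y' z' %[mod a] -> y = y' /\ z = z'.
Proof.
move=> c_gt0 hD hD' hc.
have [lt|gt|eqv] := ltngtP (lincomb y z) (lincomb y' z').
- by case: (hD' y z hc); left.
- by case: (hD y' z' (esym hc)); left.
have [lty|gty|eqy] := ltngtP y y'.
- by case: (hD' y z hc); right.
- by case: (hD y' z' (esym hc)); right.
by split=> //; move/eqP: eqv; rewrite /lincomb eqy eqn_add2l eqn_pmul2r // => /eqP.
Qed.

Lemma lincomb_minrep_lt {y z s : nat} : 0 < a -> minrep y z ->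
  is_conductor_bound a b c s -> lincomb y z < s + a.
Proof.
move=> a_gt0 hD hs; rewrite ltnNge; apply/negP => le.
have [k [y' [z' eqn]]] := hs (lincomb y z - a) ltac:(lia).
have {}eqn : lincomb y z = lincomb y' z' + k.+1 * a by move: eqn le; rewrite /lincomb; lia.
apply: (hD y' z'); first by rewrite eqn addnC modnMDl.
by left; rewrite eqn; lia.
Qed.

Lemma lincomb_mod_surj n : 0 < a -> 0 < b -> gcdn a (gcdn b c) = 1 ->
  exists y z, lincomb y z = n %[mod a].
Proof.
move=> a_gt0 b_gt0 coprime_abc; set g := gcdn b c.
have g_gt0 : 0 < g by rewrite gcdn_gt0 b_gt0.
have [km kn hk _] := egcdnP c b_gt0.
have [s t hs _] := egcdnP a g_gt0; rewrite gcdnC coprime_abc in hs.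
exists (n * s * km), (n * s * kn * a.-1).
have ea : a = a.-1.+1 by rewrite prednK.
have -> : lincomb (n * s * km) (n * s * kn * a.-1) = n + (n * t + n * s * kn * c) * a.
  rewrite /lincomb -[n * s * km * b]mulnA -[n * s * (km * b)]mulnA hk mulnDr hs.
  by move: (a.-1) ea => a' ->; ring.
by rewrite -modnDmr modnMl addn0.
Qed.

Lemma lincomb_pred {y z : nat} :
  0 < y -> 0 < z -> lincomb y.-1 z.-1 + (b + c) = lincomb y z.
Proof. by case: y z => [|y] [|z] // _ _; rewrite /lincomb !mulSn /=; lia. Qed.

Lemma box_conductor_bound alpha beta :
  0 < a -> 0 < b -> gcdn a (gcdn b c) = 1 ->
  (forall y z, minrep y z -> y < alpha /\ z < beta) ->
  is_conductor_bound a b c (alpha * b + beta * c).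
Proof.
move=> a_gt0 b_gt0 coprime_abc box n le_n.
have [y [z hyz]] := lincomb_mod_surj n a_gt0 b_gt0 coprime_abc.
have [y' [z' [hD hc _]]] := minrep_exists y z.
have [/ltnW lty /ltnW ltz] := box _ _ hD.
have le : lincomb y' z' <= n.
  by apply: leq_trans le_n; apply: leq_add; apply: leq_mul.
have [k ->] := eq_mod_addmul le (esym (etrans hc hyz)).
by exists k, y', z'; rewrite /lincomb; lia.
Qed.

Lemma minrep_axes_initial : 0 < a -> 0 < b -> 0 < c ->
  exists alpha beta,
    (forall y, minrep y 0 <-> y < alpha) /\ (forall z, minrep 0 z <-> z < beta).
Proof.
move=> a_gt0 b_gt0 c_gt0.
have [alpha minrep_y0] : exists alpha, forall y, minrep y 0 <-> y < alpha.
  apply: downward_closed_initial => [m n le|]; first exact: minrep_le.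
  exists a => hD; apply: (hD 0 0); first by rewrite /lincomb !mul0n !addn0 modnMr mod0n.
  by left; rewrite /lincomb !mul0n !addn0 muln_gt0 a_gt0.
have [beta minrep_0z] : exists beta, forall z, minrep 0 z <-> z < beta.
  apply: downward_closed_initial => [m n le|]; first exact: minrep_le.
  exists a => hD; apply: (hD 0 0); first by rewrite /lincomb !mul0n !add0n modnMr mod0n.
  by left; rewrite /lincomb !mul0n !add0n muln_gt0 a_gt0.
by exists alpha, beta.
Qed.

Section LShape.
Hypotheses (a_gt0 : 0 < a) (c_gt0 : 0 < c).
Variables alpha beta : nat.
Hypothesis minrep_y0 : forall y, minrep y 0 <-> y < alpha.
Hypothesis minrep_0z : forall z, minrep 0 z <-> z < beta.

Lemma minrep_lt_alpha {y z : nat} : minrep y z -> y < alpha.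
Proof. by move/(minrep_le (leqnn y) (leq0n z))/minrep_y0. Qed.

Lemma minrep_lt_beta {y z : nat} : minrep y z -> z < beta.
Proof. by move/(minrep_le (leq0n y) (leqnn z))/minrep_0z. Qed.

Lemma axes_cong_eq0 {y z : nat} : y < alpha -> z < beta ->
  lincomb y 0 = lincomb 0 z %[mod a] -> y = 0 /\ z = 0.
Proof. by move=> /minrep_y0 hy /minrep_0z hz /(minrep_unique c_gt0 hy hz) [-> <-]. Qed.

Lemma corner_alpha : exists z0 k, z0 < beta /\ alpha * b = z0 * c + k * a.
Proof.
have [y0 [z0 [hD hc hle]]] := minrep_exists alpha 0.
have lt_y0 := minrep_lt_alpha hD; have lt_z0 := minrep_lt_beta hD.
have y0_eq0 : y0 = 0.
  case: (posnP y0) => // y0_gt0.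
  have cong : lincomb (alpha - y0) 0 = lincomb 0 z0 %[mod a].
    apply: (eq_mod_cancel (t := y0 * b) _ _ (esym hc)); rewrite /lincomb ?addn0 ?add0n.
      by rewrite -mulnDl subnK // ltnW.
    by rewrite addnC.
  by have [] := axes_cong_eq0 _ lt_z0 cong; lia.
rewrite y0_eq0 in hc hle.
have [k hk] := eq_mod_addmul hle (esym hc).
by exists z0, k; split=> //; move: hk; rewrite /lincomb; lia.
Qed.

Lemma corner_beta : exists y1 k, y1 < alpha /\ beta * c = y1 * b + k * a.
Proof.
have [y1 [z1 [hD hc hle]]] := minrep_exists 0 beta.
have lt_y1 := minrep_lt_alpha hD; have lt_z1 := minrep_lt_beta hD.
have z1_eq0 : z1 = 0.
  case: (posnP z1) => // z1_gt0.
  have cong : lincomb y1 0 = lincomb 0 (beta - z1) %[mod a].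
    apply: (eq_mod_cancel (t := z1 * c) _ _ hc); rewrite /lincomb ?addn0 ?add0n //.
    by rewrite -mulnDl subnK // ltnW.
  by have [] := axes_cong_eq0 lt_y1 _ cong; lia.
rewrite z1_eq0 in hc hle.
have [k hk] := eq_mod_addmul hle (esym hc).
by exists y1, k; split=> //; move: hk; rewrite /lincomb; lia.
Qed.

Lemma axis_relation {y z : nat} : y < alpha -> z < beta ->
  lincomb y z = 0 %[mod a] -> y = 0 \/ z = 0 -> y = 0 /\ z = 0.
Proof.
move=> lt_y lt_z rel [y0|z0].
  by rewrite y0 in lt_y rel *; apply: axes_cong_eq0 => //; rewrite -rel /lincomb !mul0n.
by rewrite z0 in lt_z rel *; apply: axes_cong_eq0 => //; rewrite rel /lincomb !mul0n.
Qed.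

Lemma minrep_cross {y z y' z' : nat} : y' < y -> y < alpha -> z < z' -> z' < beta ->
  lincomb y z = lincomb y' z' %[mod a] -> False.
Proof.
move=> lt_y' lt_y lt_z lt_z' hc.
have cong : lincomb (y - y') 0 = lincomb 0 (z' - z) %[mod a].
  apply: (eq_mod_cancel (t := y' * b + z * c) _ _ hc); rewrite /lincomb mul0n ?addn0 ?add0n.
    by rewrite addnA -mulnDl subnK // ltnW.
  by rewrite addnCA -mulnDl subnK // ltnW.
by have [] := axes_cong_eq0 _ _ cong; lia.
Qed.

(* (alpha, 0) = (0, z0) and (0, beta) = (y1, 0) modulo a, with p = alpha - y1 and
   q = beta - z0; every point of the box outside the corner [p,alpha) x [q,beta)
   is then a minimal representative. *)
Section Corners.
Variables p q y1 z0 k1 k2 : nat.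
Hypotheses (p_gt0 : 0 < p) (q_gt0 : 0 < q).
Hypotheses (alphaE : alpha = p + y1) (betaE : beta = q + z0).
Hypothesis corner_a : alpha * b = z0 * c + k1 * a.
Hypothesis corner_b : beta * c = y1 * b + k2 * a.

Lemma relation_trivial {y z : nat} : y < alpha -> z < beta -> y < p \/ z < q ->
  lincomb y z = 0 %[mod a] -> y = 0 /\ z = 0.
Proof.
move=> lt_y lt_z hL rel; apply: axis_relation => //.
have shift x k : x + lincomb y z = x + k * a %[mod a].
  by rewrite -modnDmr rel mod0n addn0 -modnDmr modnMl addn0.
case: (posnP y) => [|y_gt0]; [by left | right]; case: (posnP z) => // z_gt0.
case: hL => lt.
  have cong : lincomb (y + y1) 0 = lincomb 0 (beta - z) %[mod a].
    apply: (eq_mod_cancel (t := z * c) (u := y1 * b + lincomb y z) (v := y1 * b + k2 * a)).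
    - by rewrite /lincomb; lia.
    - by rewrite /lincomb mul0n add0n -mulnDl subnK ?corner_b // ltnW.
    - exact: shift.
  by have [] := axes_cong_eq0 _ _ cong; lia.
have cong : lincomb (alpha - y) 0 = lincomb 0 (z + z0) %[mod a].
  apply: (eq_mod_cancel (t := y * b) (u := z0 * c + k1 * a) (v := z0 * c + lincomb y z)).
  - by rewrite /lincomb mul0n addn0 -mulnDl subnK ?corner_a // ltnW.
  - by rewrite /lincomb; lia.
  - exact/esym/shift.
by have [] := axes_cong_eq0 _ _ cong; lia.
Qed.

Lemma minrep_eq_of_le {y z y' z' : nat} : y' <= y -> z' <= z -> y < alpha -> z < beta ->
  y < p \/ z < q -> lincomb y z = lincomb y' z' %[mod a] -> y = y' /\ z = z'.
Proof.
move=> le_y le_z lt_y lt_z hL hc.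
have rel : lincomb (y - y') (z - z') = 0 %[mod a].
  apply: (eq_mod_cancel (t := lincomb y' z') _ _ hc); last by rewrite add0n.
  by rewrite -lincombD !subnK.
by have [] := relation_trivial _ _ _ rel; lia.
Qed.

Lemma minrep_Lshape y z : y < alpha -> z < beta -> y < p \/ z < q -> minrep y z.
Proof.
move=> lt_y lt_z hL.
have [y' [z' [hD hc _]]] := minrep_exists y z.
have lt_y' := minrep_lt_alpha hD; have lt_z' := minrep_lt_beta hD.
have eq_case : y' <= y -> z' <= z -> minrep y z.
  by move=> le_y le_z; have [-> ->] := minrep_eq_of_le le_y le_z lt_y lt_z hL (esym hc).
case: (leqP y y') => le_y; case: (leqP z z') => le_z.
- exact: minrep_le le_y le_z hD.
- have [lty|eqy] : y < y' \/ y = y' by lia.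
    by case: (minrep_cross lty lt_y' le_z lt_z hc).
  by apply: eq_case; lia.
- have [ltz|eqz] : z < z' \/ z = z' by lia.
    by case: (minrep_cross le_y lt_y ltz lt_z' (esym hc)).
  by apply: eq_case; lia.
- by apply: eq_case; lia.
Qed.

Lemma Lshape_area_ge : gcdn a (gcdn b c) = 1 -> a <= p * q + p * z0 + y1 * q.
Proof.
move=> coprime_abc; set A := p * q + p * z0 + y1 * q.
have Ab : A * b = a * (k1 * beta + k2 * z0).
  have := congr2 addn (congr1 (muln beta) corner_a) (congr1 (muln z0) corner_b).
  by rewrite /A alphaE betaE; lia.
have Ac : A * c = a * (k2 * alpha + k1 * y1).
  have := congr2 addn (congr1 (muln alpha) corner_b) (congr1 (muln y1) corner_a).
  by rewrite /A alphaE betaE; lia.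
apply: dvdn_leq; first by rewrite /A !addn_gt0 muln_gt0 p_gt0 q_gt0.
by apply: (dvdn_coprime3 coprime_abc); rewrite ?Ab ?Ac dvdn_mulr.
Qed.

Lemma conductor_bound_sqr_ge s : gcdn a (gcdn b c) = 1 ->
  is_conductor_bound a b c s -> 3 * (a * b * c) <= (s + a + b + c) ^ 2.
Proof.
move=> coprime_abc hs.
have alpha_gt0 : 0 < alpha by rewrite alphaE ltn_addr.
have beta_gt0 : 0 < beta by rewrite betaE ltn_addr.
have bX : lincomb alpha q <= s + a + b + c.
  have hD : minrep alpha.-1 q.-1 by apply: minrep_Lshape; lia.
  by have := lincomb_minrep_lt a_gt0 hD hs; rewrite -(lincomb_pred alpha_gt0 q_gt0); lia.
have bY : lincomb p beta <= s + a + b + c.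
  have hD : minrep p.-1 beta.-1 by apply: minrep_Lshape; lia.
  by have := lincomb_minrep_lt a_gt0 hD hs; rewrite -(lincomb_pred p_gt0 beta_gt0); lia.
apply: leq_trans (leq_trans (Lshape_area_sqr_le p q y1 z0 b c) _).
  by rewrite leq_mul2l /= !leq_mul2r Lshape_area_ge ?orbT.
by rewrite leq_exp2r // geq_max -alphaE -betaE bX bY.
Qed.

End Corners.
End LShape.
End Apery.

Lemma conductor_is_bound a b c : (exists s, is_conductor_bound a b c s) ->
  is_conductor_bound a b c (conductor a b c).
Proof.
by move=> h; rewrite /conductor; case: pselect => // h'; case: ex_minnP => m /asboolP.
Qed.

Lemma conductor_sqr_ge a b c : 0 < a -> 0 < b -> 0 < c -> gcdn a (gcdn b c) = 1 ->
  3 * (a * b * c) <= (conductor a b c + a + b + c) ^ 2.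
Proof.
move=> a_gt0 b_gt0 c_gt0 coprime_abc.
have [alpha [beta [minrep_y0 minrep_0z]]] := minrep_axes_initial a b c a_gt0 b_gt0 c_gt0.
have box y z (hD : minrep a b c y z) : y < alpha /\ z < beta.
  split; first exact: minrep_lt_alpha _ _ _ _ minrep_y0 _ _ hD.
  exact: minrep_lt_beta _ _ _ _ minrep_0z _ _ hD.
have bound := box_conductor_bound a b c alpha beta a_gt0 b_gt0 coprime_abc box.
have [z0 [k1 [lt_z0 corner_a]]] := corner_alpha _ _ _ a_gt0 c_gt0 _ _ minrep_y0 minrep_0z.
have [y1 [k2 [lt_y1 corner_b]]] := corner_beta _ _ _ a_gt0 c_gt0 _ _ minrep_y0 minrep_0z.
apply: (conductor_bound_sqr_ge _ _ _ a_gt0 c_gt0 _ _ minrep_y0 minrep_0z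
  (alpha - y1) (beta - z0) y1 z0 k1 k2) => //; try lia.
exact: conductor_is_bound (ex_intro _ _ bound).
Qed.

Lemma perturbed_relation N B d d' d'' j j' j'' x y : 0 < d' -> 0 < d'' ->
  j <= B -> j' <= B -> j'' <= B -> 2 * d * B + B < N ->
  N * d + j = x * (N * d' + j') + y * (N * d'' + j'') -> d = x * d' + y * d''.
Proof.
move=> d'_gt0 d''_gt0 le_j le_j' le_j'' lt_N e.
have [lt|gt|//] := ltngtP (x * d' + y * d'') d.
  have le_x : x <= d by apply: leq_trans (leq_pmulr x d'_gt0) _; lia.
  have le_y : y <= d by apply: leq_trans (leq_pmulr y d''_gt0) _; lia.
  have := leq_mul le_x le_j'; have := leq_mul le_y le_j''.
  have : N * (x * d' + y * d'') + N <= N * d by rewrite -mulnSr leq_mul2l lt orbT.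
  lia.
have : N * d + N <= N * (x * d' + y * d'') by rewrite -mulnSr leq_mul2l gt orbT.
lia.
Qed.

Lemma minimal_gen3_perturb N B d1 d2 d3 j1 j2 j3 : minimal_gen3 d1 d2 d3 ->
  j1 <= B -> j2 <= B -> j3 <= B -> 2 * maxn d1 (maxn d2 d3) * B + B < N ->
  minimal_gen3 (N * d1 + j1) (N * d2 + j2) (N * d3 + j3).
Proof.
move=> [[d1_gt0 d2_gt0 d3_gt0] [m1 m2 m3]] le_j1 le_j2 le_j3 lt_N.
have bound d : d <= maxn d1 (maxn d2 d3) -> 2 * d * B + B < N.
  by move=> le_d; have := leq_mul (leq_mul (leqnn 2) le_d) (leqnn B); lia.
have N_gt0 : 0 < N by lia.
split; first by split; apply: ltn_addr; rewrite muln_gt0 N_gt0.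
split=> -[x [y e]].
- by apply: m1; exists x, y; apply: (perturbed_relation _ B) e => //; apply: bound; lia.
- by apply: m2; exists x, y; apply: (perturbed_relation _ B) e => //; apply: bound; lia.
- by apply: m3; exists x, y; apply: (perturbed_relation _ B) e => //; apply: bound; lia.
Qed.

Lemma gcd3_perturb_eq1 N d1 d2 j1 j2 x : d2 * j1 = d1 * j2 + gcdn d1 d2 ->
  x = 1 %[mod gcdn d1 d2] -> gcdn (N * d1 + j1) (gcdn (N * d2 + j2) x) = 1.
Proof.
move=> hj hx; set g := gcdn d1 d2; set G := gcdn _ _.
have G_g : G %| g.
  have e : d2 * (N * d1 + j1) = d1 * (N * d2 + j2) + g by rewrite !mulnDr hj; ring.
  have := dvdn_mull d2 (dvdn_gcdl (N * d1 + j1) (gcdn (N * d2 + j2) x)).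
  rewrite -/G e dvdn_addr // dvdn_mull //.
  exact: dvdn_trans (dvdn_gcdr _ _) (dvdn_gcdl _ _).
have G_x : G %| x by apply: dvdn_trans (dvdn_gcdr _ _) (dvdn_gcdr _ _).
apply/eqP; rewrite -dvdn1.
by move: G_x; rewrite /dvdn -(@modn_dvdm g x G G_g) hx (@modn_dvdm g 1 G G_g).
Qed.

Lemma perturbation_witness d1 d2 d3 : minimal_gen3 d1 d2 d3 ->
  exists B, forall N, B <= N -> exists j1 j2 j3, [/\ j1 <= B, j2 <= B, j3 <= B,
    gcdn (N * d1 + j1) (gcdn (N * d2 + j2) (N * d3 + j3)) = 1 &
    minimal_gen3 (N * d1 + j1) (N * d2 + j2) (N * d3 + j3)].
Proof.
move=> min_d; have [[d1_gt0 d2_gt0 _] _] := min_d.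
set g := gcdn d1 d2.
have g_gt0 : 0 < g by rewrite gcdn_gt0 d1_gt0.
have le_g : g <= d1 by apply: dvdn_leq => //; exact: dvdn_gcdl.
have [km kn hk hkn] := egcdnP d1 d2_gt0; rewrite gcdnC -/g in hk hkn.
have lt_kn : kn < d2 by apply: leq_ltn_trans hkn; rewrite leq_pmulr.
have le_km : km <= d1.
  rewrite -ltnS -(ltn_pmul2r d2_gt0) hk.
  by have := leq_mul lt_kn (leqnn d1); rewrite mulSn; lia.
set B0 := d1 + d2 + 1.
exists (2 * maxn d1 (maxn d2 d3) * B0 + B0 + 1) => N le_N.
pose j3 := g - N * d3 %% g + 1.
have lt_r : N * d3 %% g < g by rewrite ltn_pmod.
exists km, kn, j3; split; rewrite /j3; try lia.
- apply: gcd3_perturb_eq1; first by rewrite mulnC hk mulnC.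
  have -> : N * d3 + (g - N * d3 %% g + 1) = (N * d3 %/ g).+1 * g + 1.
    by rewrite {1}(divn_eq (N * d3) g); lia.
  by rewrite modnMDl.
- by apply: (minimal_gen3_perturb _ B0) => //; lia.
Qed.

Lemma sqr_sum_le_prod N D m x1 x2 x3 : 72 * D ^ 2 * m <= N ->
  N <= 2 * x1 -> N <= 2 * x2 -> N <= 2 * x3 ->
  x1 <= N * D -> x2 <= N * D -> x3 <= N * D ->
  (x1 + x2 + x3) ^ 2 * m <= x1 * x2 * x3.
Proof.
move=> le_N l1 l2 l3 u1 u2 u3.
have h1 : (x1 + x2 + x3) ^ 2 * m <= (3 * (N * D)) ^ 2 * m.
  by apply: leq_mul => //; rewrite leq_exp2r //; lia.
have h2 : 72 * D ^ 2 * m * N ^ 2 <= N * N ^ 2 by exact: leq_mul.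
have h3 := leq_mul (leq_mul l1 l2) l3.
lia.
Qed.

Lemma ecomp_shift N d r j (lt_rj : r + j < 2 * r + 1) :
  ecomp N d (Ordinal lt_rj) = Posz (N * d + j).
Proof. by rewrite /ecomp /=; lia. Qed.

Lemma ecompE N d r (i : 'I_(2 * r + 1)) : r <= N * d -> ecomp N d i = Posz (N * d + i - r).
Proof. by move=> h; rewrite /ecomp; lia. Qed.

Local Open Scope classical_set_scope.
Local Open Scope ring_scope.

Lemma sqrt3_sub_mul_le_conductor (R : realType) (C s P m : nat) (e : R) :
  0 < e -> 1 <= m%:R * e ^+ 2 -> (3 * P <= (C + s) ^ 2)%N -> (s ^ 2 * m <= P)%N ->
  (Num.sqrt 3 - e) * Num.sqrt (P%:R) <= C%:R.
Proof.
move=> e_gt0 me hCP hsP.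
have h1 : Num.sqrt 3 * Num.sqrt (P%:R) <= C%:R + s%:R :> R.
  rewrite -sqrtrM ?ler0n //.
  have : 3 * P%:R <= (C%:R + s%:R) ^+ 2 :> R by rewrite -natrD -natrX -natrM ler_nat.
  by move/ler_wsqrtr; rewrite sqrtr_sqr ger0_norm.
have h2 : s%:R <= e * Num.sqrt (P%:R).
  have : s%:R ^+ 2 <= (e * Num.sqrt (P%:R)) ^+ 2.
    rewrite exprMn sqr_sqrtr ?ler0n // mulrC.
    apply: le_trans (_ : s%:R ^+ 2 * (m%:R * e ^+ 2) <= _).
      by rewrite ler_peMr ?exprn_ge0 ?ler0n.
    rewrite mulrA; apply: ler_wpM2r; first by rewrite exprn_ge0 ?ltW.
    by rewrite -natrX -natrM ler_nat.
  move/ler_wsqrtr; rewrite !sqrtr_sqr !ger0_norm ?ler0n //.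
  by rewrite mulr_ge0 ?sqrtr_ge0 // ltW.
by rewrite mulrBl; lra.
Qed.

Lemma ler_sum_ratio (R : realFieldType) (I : finType) (P : pred I) (v w : I -> R) (k : R) :
  0 < \sum_(i | P i) w i -> (forall i, P i -> k * w i <= v i) ->
  k <= (\sum_(i | P i) v i) / \sum_(i | P i) w i.
Proof. by move=> w_gt0 hk; rewrite ler_pdivlMr // mulr_sumr; apply: ler_sum. Qed.

Lemma limn_einf_ge (R : realType) (u : (\bar R)^nat) (l : \bar R) :
  (\forall n \near \oo, (l <= u n)%E) -> (l <= limn_einf u)%E.
Proof.
case=> N _ ge_u; rewrite limn_einf_lim; apply: lime_ge; first exact: is_cvg_einfs.
exists N => // n /= le_Nn; apply/ereal_infP => _ [k /= le_nk <-].
by apply: ge_u; apply: leq_trans le_nk.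
Qed.

Lemma eventually_double_le (R : realType) (r : nat -> nat) :
  (fun N => (r N)%:R / N%:R : R) @ \oo --> 0 -> \forall N \near \oo, (2 * r N <= N)%N.
Proof.
move=> ratio_cvg.
have [N0 _ small] := cvgr0_norm_lt _ ratio_cvg (2^-1 : R) ltac:(by rewrite invr_gt0).
exists N0.+1 => // N /= le_N.
have N_gt0 : 0 < N%:R :> R by rewrite ltr0n; lia.
have := small N (ltnW le_N); rewrite /= ger0_norm ?divr_ge0 // ltr_pdivrMr // => h.
by rewrite -(ler_nat R) natrM; lra.
Qed.

Lemma sqrt3_sub_le_K (R : realType) d1 d2 d3 N r m (e : R) :
  (0 < d1)%N -> (d1 < d2)%N -> (d2 < d3)%N -> 0 < e -> 1 <= m%:R * e ^+ 2 ->
  (2 * r <= N)%N -> (72 * (d3 + 1) ^ 2 * m <= N)%N ->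
  (exists j1 j2 j3, [/\ (j1 <= r)%N, (j2 <= r)%N, (j3 <= r)%N,
     gcdn (N * d1 + j1) (gcdn (N * d2 + j2) (N * d3 + j3)) = 1 &
     minimal_gen3 (N * d1 + j1) (N * d2 + j2) (N * d3 + j3)]) ->
  Num.sqrt 3 - e <= K R d1 d2 d3 N r.
Proof.
move=> d1_gt0 lt_d12 lt_d23 e_gt0 me le_rN le_N.
move=> [j1 [j2 [j3 [le_j1 le_j2 le_j3 coprime_j min_j]]]].
have N_gt0 : (0 < N)%N.
  case: m me le_N => [|m' _ le]; first by rewrite mul0r ler10.
  by apply: leq_trans le; rewrite !muln_gt0 addn1.
have Nd1 : (N <= N * d1)%N by rewrite leq_pmulr.
have Nd13 : (N * d1 <= N * d3)%N by rewrite leq_mul2l; lia.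
have Nd23 : (N * d2 <= N * d3)%N by rewrite leq_mul2l; lia.
have Nd12 : (N * d1 <= N * d2)%N by rewrite leq_mul2l; lia.
apply: ler_sum_ratio => [|[[i1 i2 i3]] /asboolP].
  have o1 : (r + j1 < 2 * r + 1)%N by lia.
  have o2 : (r + j2 < 2 * r + 1)%N by lia.
  have o3 : (r + j3 < 2 * r + 1)%N by lia.
  pose i0 : trip r := (Ordinal o1, Ordinal o2, Ordinal o3).
  have Mi0 : inM N d1 d2 d3 i0.
    rewrite /inM /i0 !ecomp_shift /=; split=> //; rewrite ltz_nat; lia.
  rewrite (bigD1 i0) ?asboolT //=; apply: ltr_wpDr.
    by apply: sumr_ge0 => i _; exact: sqrtr_ge0.
  by rewrite sqrtr_gt0 ltr0n /prodof /i0 !ecomp_shift /= !muln_gt0; lia.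
have hi1 := ltn_ord i1; have hi2 := ltn_ord i2; have hi3 := ltn_ord i3.
rewrite /inM /Cof /prodof !ecompE /=; try lia.
set x1 := (N * d1 + i1 - r)%N; set x2 := (N * d2 + i2 - r)%N; set x3 := (N * d3 + i3 - r)%N.
rewrite !ltz_nat => -[x1_gt0 x2_gt0 x3_gt0 coprime_x _].
apply: (sqrt3_sub_mul_le_conductor _ _ (x1 + x2 + x3)) e_gt0 me _ _.
  by rewrite !addnA conductor_sqr_ge.
by apply: (sqr_sum_le_prod N (d3 + 1)); lia.
Qed.

Theorem mainTheorem4 (R : realType) (d1 d2 d3 : nat) (r : nat -> nat) :
  (0 < d1)%N -> (d1 < d2)%N -> (d2 < d3)%N ->
  gcdn d1 (gcdn d2 d3) = 1%N ->
  minimal_gen3 d1 d2 d3 ->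
  ((fun N => ((r N)%:R : R)) @ \oo --> +oo) ->
  ((fun N => ((r N)%:R / (N%:R) : R)) @ \oo --> 0) ->
  ((Num.sqrt (3%:R : R))%:E <= limn_einf (fun N => (K R d1 d2 d3 N (r N))%:E))%E.
Proof.
move=> d1_gt0 lt_d12 lt_d23 _ min_d r_cvg ratio_cvg.
have [B witness] := perturbation_witness _ _ _ min_d.
apply/lee_subgt0Pr => e e_gt0.
have [m me] : exists m : nat, 1 <= m%:R * e ^+ 2.
  exists (Num.Def.archi_bound (e ^+ 2)^-1); rewrite -ler_pdivrMr ?exprn_gt0 // div1r.
  by apply/ltW/archi_boundP; rewrite invr_ge0 exprn_ge0 // ltW.
apply: limn_einf_ge; near=> N.
have le_B : (B <= r N)%N.
  by near: N; apply: filterS ((cvgryPge _).1 r_cvg B%:R) => N /=; rewrite ler_nat.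
have le_rN : (2 * r N <= N)%N by near: N; exact: eventually_double_le ratio_cvg.
have le_N : (72 * (d3 + 1) ^ 2 * m <= N)%N by near: N; exists (72 * (d3 + 1) ^ 2 * m)%N.
rewrite -EFinD lee_fin; apply: (sqrt3_sub_le_K _ _ _ _ _ _ m) => //.
have [j1 [j2 [j3 [le_j1 le_j2 le_j3 coprime_j min_j]]]] := witness N ltac:(lia).
by exists j1, j2, j3; split => //; lia.
Unshelve. all: end_near.
Qed.
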